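(* Let $H=(V,\mathcal E)$ be a hypergraph with maximum degree $\Delta$ in which every hyperedge has at most $k$ vertices. Let $B\subseteq\mathcal E$ be a set of hyperedges inducing a connected subgraph of $\mathrm L^2(H)$, and let $e^*\in B$. Then there exists a $\{2,3\}$-tree $T\subseteq B$ in $\mathrm{Lin}(H)$ with $e^*\in T$ and $|T|\ge\frac{|B|}{k\Delta}$.
   Context: $\mathrm{Lin}(H)$ is the line graph of $H$: its vertices are the hyperedges of $H$, two distinct hyperedges adjacent iff they share a vertex. $\mathrm L^2(H)$ is the graph on the hyperedges of $H$ in which two hyperedges are adjacent iff their distance in $\mathrm{Lin}(H)$ is at most $2$. For a graph $G$, a set $T$ of its vertices is a $\{2,3\}$-tree if (1) $\mathrm{dist}_G(u,w)\ge 2$ for all distinct $u,w\in T$, and (2) the graph on $T$ joining $u,w$ whenever $\mathrm{dist}_G(u,w)\in\{2,3\}$ is connected. *)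

From mathcomp Require Import all_boot.
Set Implicit Arguments. Unset Strict Implicit. Unset Printing Implicit Defensive.

Section Hypergraph.
Variable V : finType.
Variable E : {set {set V}}.

Definition hdeg (v : V) : nat := #|[set e in E | v \in e]|.

Definition lin_adj (e f : {set V}) : bool :=
  [&& e \in E, f \in E, e != f & ~~ [disjoint e & f]].

Fixpoint lin_within (n : nat) (e f : {set V}) : bool :=
  match n with
  | 0 => e == f
  | n'.+1 => lin_within n' e f || [exists g, lin_within n' e g && lin_adj g f]
  end.

Definition L2_adj (e f : {set V}) : bool :=
  [&& e \in E, f \in E, e != f & lin_within 2 e f].

Definition L2_connected (B : {set {set V}}) : Prop :=
  forall e f, e \in B -> f \in B ->
    connect [rel x y | [&& x \in B, y \in B & L2_adj x y]] e f.

Definition tree23 (T : {set {set V}}) : Prop :=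
  (forall u w, u \in T -> w \in T -> u != w -> ~~ lin_within 1 u w) /\
  (forall u w, u \in T -> w \in T ->
     connect [rel x y | [&& x \in T, y \in T,
                           lin_within 3 x y & ~~ lin_within 1 x y]] u w).
End Hypergraph.

From mathcomp Require Import all_boot.

Set Implicit Arguments.
Unset Strict Implicit.
Unset Printing Implicit Defensive.

(* Grow T greedily from {e*}.  While some f in B is at distance at least 2 in
   Lin(H) from all of T, the L^2-connectivity of B yields such an f at
   distance at most 2 from a hyperedge dominated by T, hence at distance 2 or
   3 from T, so adding f keeps T a {2,3}-tree.  When the process stops, T
   dominates B in Lin(H), and every closed neighbourhood in Lin(H) has at
   most k * Delta hyperedges. *)

Lemma connect_cross (T : finType) (r : rel T) (P : pred T) a b :
  connect r a b -> P a -> ~~ P b -> exists x y, [/\ r x y, P x & ~~ P y].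
Proof.
case/connectP=> p + ->; elim: p a => [|c p IHp] a /=; first by move=> _ ->.
case/andP=> rac pc Pa; case Pc: (P c); first exact: IHp.
by exists a, c; rewrite Pc.
Qed.

Lemma card_bigcup_leq (I T : finType) (P : pred I) (F : I -> {set T}) :
  #|\bigcup_(i | P i) F i| <= \sum_(i | P i) #|F i|.
Proof.
elim/big_rec2: _ => [|i n A _ leAn]; first by rewrite cards0.
by apply: leq_trans (leq_card_setU _ _) _; rewrite leq_add2l.
Qed.

Section Hypergraph.
Variables (V : finType) (E : {set {set V}}).

Definition lin_nbhd (t : {set V}) : {set {set V}} :=
  [set f in E | lin_within E 1 t f].

Definition dominates (T B : {set {set V}}) : bool :=
  [forall f in B, exists t in T, lin_within E 1 t f].

Definition rel23 (T : {set {set V}}) : rel {set V} := fun x y =>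
  [&& x \in T, y \in T, lin_within E 3 x y & ~~ lin_within E 1 x y].

Lemma lin_adj_sym : symmetric (lin_adj E).
Proof. by move=> e f; rewrite /lin_adj andbCA eq_sym disjoint_sym. Qed.

Lemma lin_within1 e f : lin_within E 1 e f = (e == f) || lin_adj E e f.
Proof.
congr (_ || _); apply/existsP/idP => [[g /andP[/eqP <- //]]|adj_ef].
by exists e; rewrite eqxx.
Qed.

Lemma lin_within_trans m n a b c :
  lin_within E m a b -> lin_within E n b c -> lin_within E (m + n) a c.
Proof.
move=> ab; elim: n c => [|n IHn] c /=; first by move/eqP <-; rewrite addn0.
rewrite addnS /= => /orP[/IHn -> //|/existsP[g /andP[/IHn ag adj_gc]]].
by apply/orP; right; apply/existsP; exists g; rewrite ag.
Qed.

Lemma lin_within_sym n : symmetric (lin_within E n).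
Proof.
suff within_sym e f : lin_within E n e f -> lin_within E n f e.
  by move=> e f; apply/idP/idP; apply: within_sym.
elim: n e f => [|n IHn] e f /=; first by rewrite eq_sym.
case/orP=> [/IHn -> //|/existsP[g /andP[/IHn gf adj_gf]]].
have fg : lin_within E 1 f g by rewrite lin_within1 lin_adj_sym adj_gf orbT.
exact: lin_within_trans fg gf.
Qed.

Lemma rel23_sym T : symmetric (rel23 T).
Proof.
by move=> x y; rewrite /rel23 (lin_within_sym 3) (lin_within_sym 1) andbCA.
Qed.

Lemma tree23_set1 a : tree23 E [set a].
Proof.
by split=> u w; rewrite !inE => /eqP-> /eqP->; rewrite ?eqxx ?connect0.
Qed.

Lemma tree23_setU1 T t y :
  tree23 E T -> t \in T -> lin_within E 3 t y ->
  (forall u, u \in T -> ~~ lin_within E 1 u y) -> tree23 E (y |: T).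
Proof.
move=> [T_far T_conn] tT ty far_y; split=> [u w|].
  case/setU1P=> [->|uT] /setU1P[->|wT]; rewrite ?eqxx //.
  - by rewrite lin_within_sym far_y.
  - by rewrite far_y.
  - exact: T_far.
have to_y u : u \in y |: T -> connect (rel23 (y |: T)) u y.
  have sub_rel : subrel (rel23 T) (connect (rel23 (y |: T))).
    move=> a b /and4P[aT bT ab nab]; apply: connect1.
    by rewrite /rel23 !inE aT bT ab nab !orbT.
  case/setU1P=> [->|uT]; first exact: connect0.
  apply: connect_trans (connect_sub sub_rel (T_conn u t uT tT)) (connect1 _).
  by rewrite /rel23 !inE eqxx tT ty far_y ?orbT.
move=> u w /to_y uy /to_y wy.
by apply: connect_trans uy _; rewrite (sym_connect_sym (rel23_sym _)).
Qed.

(* [maxn 1]: an empty hyperedge is its own only neighbour. *)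
Lemma card_lin_nbhd t :
  t \in E -> #|lin_nbhd t| <= maxn 1 (\sum_(v in t) hdeg E v).
Proof.
move=> tE; have [-> | [v0 v0t]] := set_0Vmem t.
  apply: leq_trans (leq_maxl 1 _); rewrite -(cards1 (set0 : {set V})).
  apply/subset_leq_card/subsetP => f; rewrite !inE lin_within1.
  case/andP=> _ /orP[/eqP <-|/and4P[_ _ _]]; first by rewrite eqxx.
  by rewrite disjoints_subset sub0set.
apply: leq_trans (leq_maxr 1 _).
apply: leq_trans (card_bigcup_leq (mem t) (fun v => [set e in E | v \in e])).
apply/subset_leq_card/subsetP => f; rewrite !inE lin_within1.
case/andP=> fE /orP[/eqP <-|/and4P[_ _ _ /pred0Pn[v /andP[vt vf]]]].
  by apply/bigcupP; exists v0; rewrite // inE tE.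
by apply/bigcupP; exists v; rewrite // inE fE.
Qed.

Lemma card_dominated (T B : {set {set V}}) :
  B \subset E -> dominates T B -> #|B| <= \sum_(t in T) #|lin_nbhd t|.
Proof.
move=> BE /forall_inP domB.
apply: leq_trans (card_bigcup_leq (mem T) lin_nbhd).
apply/subset_leq_card/subsetP => f fB; have /exists_inP[t tT tf] := domB f fB.
by apply/bigcupP; exists t; rewrite // inE tf (subsetP BE).
Qed.

Variable B : {set {set V}}.
Hypothesis B_L2conn : L2_connected E B.

Lemma exists_undominated_within3 (T : {set {set V}}) a :
  T \subset B -> a \in T -> ~~ dominates T B ->
  exists t y, [/\ t \in T, y \in B, lin_within E 3 t y &
                  forall u, u \in T -> ~~ lin_within E 1 u y].
Proof.
move=> TB aT /forall_inPn[f fB /exists_inPn far_f].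
pose dominated x := [exists t in T, lin_within E 1 t x].
have aB := subsetP TB a aT.
have [||x [y [/and3P[_ yB /and4P[_ _ _ xy]]]]] :=
  connect_cross (P := dominated) (B_L2conn aB fB).
- by apply/exists_inP; exists a; rewrite //= eqxx.
- exact/exists_inPn.
case/exists_inP=> t tT tx /exists_inPn far_y.
by exists t, y; split=> //; apply: (@lin_within_trans 1 2 _ x).
Qed.

Lemma exists_dominating_tree23 (T : {set {set V}}) a :
  T \subset B -> tree23 E T -> a \in T ->
  exists T' : {set {set V}},
    [/\ T \subset T', T' \subset B, tree23 E T' & dominates T' B].
Proof.
have [n] := ubnP (#|B| - #|T|); elim: n T => // n IHn T ltBTn TB treeT aT.
have [domT|] := boolP (dominates T B); first by exists T; split.
case/(exists_undominated_within3 TB aT)=> [t [y [tT yB ty far_y]]].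
have yNT : y \notin T by apply/negP=> /far_y; rewrite lin_within1 eqxx.
have yTB : y |: T \subset B by rewrite subUset sub1set yB TB.
have ltBTn' : #|B| - #|y |: T| < n.
  have := subset_leq_card yTB; rewrite cardsU1 yNT add1n => ltTB.
  by rewrite -ltnS subnSK.
have treeyT := tree23_setU1 treeT tT ty far_y.
have [T' [sub_yT_T' T'B treeT' domT']] := IHn _ ltBTn' yTB treeyT (setU1r y aT).
by exists T'; split=> //; apply: subset_trans sub_yT_T'; apply: subsetUr.
Qed.

End Hypergraph.

Theorem lemma4p5 (V : finType) (E : {set {set V}}) (k Delta : nat)
  (k_gt0 : 0 < k) (Delta_gt0 : 0 < Delta)
  (hdeg_le : forall v : V, hdeg E v <= Delta)
  (size_le : forall e, e \in E -> #|e| <= k)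
  (B : {set {set V}}) (BsubE : B \subset E) (Bconn : L2_connected E B)
  (estar : {set V}) (estarB : estar \in B) :
  exists T : {set {set V}},
    [/\ T \subset B, tree23 E T, estar \in T & #|B| <= k * Delta * #|T|].
Proof.
have estar_sub : [set estar] \subset B by rewrite sub1set.
have [T [estarT TB treeT domT]] :=
  exists_dominating_tree23 Bconn estar_sub (tree23_set1 E estar) (set11 estar).
exists T; split=> //; first by rewrite -sub1set.
apply: leq_trans (card_dominated BsubE domT) _.
rewrite mulnC -sum_nat_const; apply: leq_sum => t tT.
have tE : t \in E := subsetP (subset_trans TB BsubE) t tT.
apply: leq_trans (card_lin_nbhd tE) _.
rewrite geq_max muln_gt0 k_gt0 Delta_gt0 /=.
apply: (@leq_trans (\sum_(v in t) Delta)); first exact: leq_sum.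
by rewrite sum_nat_const leq_mul2r size_le ?orbT.
Qed.
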